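(* Let $a\ge b\ge2$ and $k$ be integers with $a+b+1\le k\le a+2b-1$. Then for every $(i,j)\in Q_3$ we have $w_2,w_3,w_4,w_6\in\mathcal{R}^k_{(a,b),(i,j)}$.
   Context: $\widehat{\mathfrak{su}}(3)_k$ fusion. Let $P_+^k=\{(\lambda_1,\lambda_2)\in\mathbb{Z}_{\ge0}^2:\lambda_1+\lambda_2\le k\}$. For $\lambda,\mu,\nu\in P_+^k$ set - $\mathcal{A}=\tfrac13[2(\lambda_1+\mu_1+\nu_2)+\lambda_2+\mu_2+\nu_1]$, - $\mathcal{B}=\tfrac13[\lambda_1+\mu_1+\nu_2+2(\lambda_2+\mu_2+\nu_1)]$, - $k_0^{\max}=\min(\mathcal{A},\mathcal{B})$, - $k_0^{\min}=\max(\lambda_1+\lambda_2,\mu_1+\mu_2,\nu_1+\nu_2,\mathcal{A}-\lambda_1,\mathcal{A}-\mu_1,\mathcal{A}-\nu_2,\mathcal{B}-\lambda_2,\mathcal{B}-\mu_2,\mathcal{B}-\nu_1)$. The fusion multiplicity is $N^{(k)\nu}_{\lambda,\mu}=\min(k_0^{\max},k)-k_0^{\min}+1$ if $\mathcal{A},\mathcal{B}$ are nonnegative integers, $k_0^{\max}\ge k_0^{\min}$ and $k\ge k_0^{\min}$; otherwise it is $0$. The set $\mathcal{R}^k_{\lambda,\mu}$ is $\{\nu\in P_+^k:N^{(k)\nu}_{\lambda,\mu}\ne0\}$. The candidate weights are $w_1=(a-1,b+2)$, $w_2=(a+2,b-1)$, $w_3=(a+1,b-2)$, $w_4=(a-2,b+1)$,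 $w_5=(a+1,b+1)$, $w_6=(a-1,b-1)$. The set $Q_3$ is defined by $Q_3=\{(p-2k+2a+2b,p+k-a-b):p\in\mathbb{Z},\ 2k-2a-2b\le p\le k-a-1\}$. *)

From mathcomp Require Import all_boot all_order all_algebra.
Set Implicit Arguments. Unset Strict Implicit. Unset Printing Implicit Defensive.
Import Order.TTheory GRing.Theory Num.Theory.
Local Open Scope ring_scope.

Definition weight := (int * int)%type.

Definition inPk (k : int) (l : weight) : bool :=
  [&& 0 <= l.1, 0 <= l.2 & l.1 + l.2 <= k].

Definition A3 (l m n : weight) : int := 2 * (l.1 + m.1 + n.2) + l.2 + m.2 + n.1.
Definition B3 (l m n : weight) : int := l.1 + m.1 + n.2 + 2 * (l.2 + m.2 + n.1).

Definition AB_ok (l m n : weight) : bool :=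
  [&& (3 %| A3 l m n)%Z, (3 %| B3 l m n)%Z, 0 <= A3 l m n & 0 <= B3 l m n].

Definition Aval (l m n : weight) : int := (A3 l m n %/ 3)%Z.
Definition Bval (l m n : weight) : int := (B3 l m n %/ 3)%Z.

Definition k0max (l m n : weight) : int := Num.min (Aval l m n) (Bval l m n).

Definition k0min (l m n : weight) : int :=
  let A := Aval l m n in let B := Bval l m n in
  Num.max (l.1 + l.2) (Num.max (m.1 + m.2) (Num.max (n.1 + n.2)
  (Num.max (A - l.1) (Num.max (A - m.1) (Num.max (A - n.2)
  (Num.max (B - l.2) (Num.max (B - m.2) (B - n.1)))))))).

Definition fusionN (k : int) (l m n : weight) : int :=
  if [&& AB_ok l m n, k0min l m n <= k0max l m n & k0min l m n <= k]
  then Num.min (k0max l m n) k - k0min l m n + 1 else 0.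

Definition inR (k : int) (l m n : weight) : bool :=
  inPk k n && (fusionN k l m n != 0).

Definition w2 (a b : int) : weight := (a + 2, b - 1).
Definition w3 (a b : int) : weight := (a + 1, b - 2).
Definition w4 (a b : int) : weight := (a - 2, b + 1).
Definition w6 (a b : int) : weight := (a - 1, b - 1).

Definition Q3 (a b k : int) (ij : weight) : Prop :=
  exists p : int, [/\ 2 * k - 2 * a - 2 * b <= p, p <= k - a - 1 &
     ij = (p - 2 * k + 2 * a + 2 * b, p + k - a - b)].

From mathcomp Require Import all_boot all_order all_algebra zify.
Import Order.TTheory GRing.Theory Num.Theory.
Local Open Scope ring_scope.

(* For each of the four weights nu, 3A and 3B are explicit multiples of 3
   that are affine in the parameter p of Q3, so A and B are known integers.
   The nine lower bounds defining k0min are then affine in a, b, k, p, and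
   under the hypotheses they are all at most min(A, B) and at most k: the
   multiplicity is positive by linear arithmetic. *)

Definition k0min_at (l m n : weight) (A B : int) : int :=
  Num.max (l.1 + l.2) (Num.max (m.1 + m.2) (Num.max (n.1 + n.2)
  (Num.max (A - l.1) (Num.max (A - m.1) (Num.max (A - n.2)
  (Num.max (B - l.2) (Num.max (B - m.2) (B - n.1)))))))).

Section ExplicitAB.

Context {l m n : weight} {X Y : int}.
Hypotheses (A3E : A3 l m n = X * 3) (B3E : B3 l m n = Y * 3).

Lemma AvalE : Aval l m n = X.
Proof. by rewrite /Aval A3E mulzK. Qed.

Lemma BvalE : Bval l m n = Y.
Proof. by rewrite /Bval B3E mulzK. Qed.

Lemma k0minE : k0min l m n = k0min_at l m n X Y.
Proof. by rewrite /k0min AvalE BvalE. Qed.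

Lemma k0maxE : k0max l m n = Num.min X Y.
Proof. by rewrite /k0max AvalE BvalE. Qed.

Lemma AB_ok_mul3 : 0 <= X -> 0 <= Y -> AB_ok l m n.
Proof. by move=> X_ge0 Y_ge0; rewrite /AB_ok A3E B3E !dvdz_mull //=; lia. Qed.

End ExplicitAB.

Lemma fusionN_neq0 (k : int) (l m n : weight) :
  AB_ok l m n -> k0min l m n <= k0max l m n -> k0min l m n <= k ->
  fusionN k l m n != 0.
Proof. by move=> ok le_max le_k; rewrite /fusionN ok le_max le_k /=; lia. Qed.

Lemma inR_mul3 (k : int) (l m n : weight) (X Y : int) :
  A3 l m n = X * 3 -> B3 l m n = Y * 3 -> 0 <= X -> 0 <= Y -> inPk k n ->
  k0min_at l m n X Y <= Num.min X Y -> k0min_at l m n X Y <= k ->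
  inR k l m n.
Proof.
move=> A3E B3E X_ge0 Y_ge0 n_in le_max le_k.
rewrite /inR n_in fusionN_neq0 ?(AB_ok_mul3 A3E B3E) //.
  by rewrite (k0minE A3E B3E) (k0maxE A3E B3E).
by rewrite (k0minE A3E B3E).
Qed.

Theorem mainTheorem11 (a b k : int) :
  2 <= b -> b <= a -> a + b + 1 <= k -> k <= a + 2 * b - 1 ->
  forall ij : weight, Q3 a b k ij ->
    [/\ inR k (a, b) ij (w2 a b), inR k (a, b) ij (w3 a b),
        inR k (a, b) ij (w4 a b) & inR k (a, b) ij (w6 a b)].
Proof.
move=> b_ge2 b_le_a k_lb k_ub ij [p [p_lb p_ub ->]].
split; [ apply: (@inR_mul3 _ _ _ _ (2 * a + 2 * b + p - k) (a + b + p + 1))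
       | apply: (@inR_mul3 _ _ _ _ (2 * a + 2 * b + p - k - 1) (a + b + p))
       | apply: (@inR_mul3 _ _ _ _ (2 * a + 2 * b + p - k) (a + b + p - 1))
       | apply: (@inR_mul3 _ _ _ _ (2 * a + 2 * b + p - k - 1) (a + b + p - 1)) ].
all: rewrite /A3 /B3 /inPk /k0min_at /= ?ge_max ?le_min; lia.
Qed.
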